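(* Let $A \in \mathbb{R}^{m\times n}$, $B \in \mathbb{R}^{n\times m}$, nonzero $b\in\mathbb{R}^m$, $c\in\mathbb{R}^n$, $\lambda,\mu\in\mathbb{R}$, $K := \begin{bmatrix} \lambda I_m & A \\ B & \mu I_n\end{bmatrix}$, $d := (b,c) \in \mathbb{R}^{m+n}$ and $D := \begin{bmatrix} b & 0 \\ 0 & c\end{bmatrix} \in \mathbb{R}^{(m+n)\times 2}$. Let $k\ge 1$ and suppose the orthogonal Hessenberg reduction process (described in the context) runs without breakdown for $k-1$ steps. Then: (i) the column space of $W_k$ equals the block Krylov subspace $\mathcal{K}_k(K,D) := \operatorname{span}\{\text{columns of } D, KD, \ldots, K^{k-1}D\}$; (ii) $\mathcal{K}_k(K,d) := \operatorname{span}\{d, Kd, \ldots, K^{k-1}d\} \subseteq \mathcal{K}_k(K,D)$; (iii) consequently $\min_{z\in\mathbb{R}^{2k}} \|d - K W_k z\| \le \min_{x \in \mathcal{K}_k(K,d)} \|d - Kx\|$, i.e. the residual norm of the minimum-residual iterate over the column space of $W_k$ is at most the residual norm of the $k$-th \textsc{Gmres} iterate (with zero initial guess) for $Kx = d$.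
   Context: Orthogonal Hessenberg reduction process. Given $A \in \mathbb{R}^{m\times n}$, $B\in\mathbb{R}^{n\times m}$ and nonzero $b\in\mathbb{R}^m$, $c \in \mathbb{R}^n$: set $\beta = \|b\|$, $\gamma = \|c\|$, $v_1 = b/\beta$, $u_1 = c/\gamma$. For $k=1,2,\ldots$: for $i=1,\ldots,k$ set $h_{i,k} = v_i^T A u_k$ and $f_{i,k} = u_i^T B v_k$; set $q = A u_k - \sum_{i=1}^k h_{i,k} v_i$, $p = B v_k - \sum_{i=1}^k f_{i,k} u_i$, $h_{k+1,k} = \|q\|$, $f_{k+1,k} = \|p\|$, $v_{k+1} = q/h_{k+1,k}$, $u_{k+1} = p/f_{k+1,k}$. The process runs without breakdown for $k$ steps if $h_{j+1,j}>0$ and $f_{j+1,j}>0$ for $j=1,\ldots,k$. Norms are Euclidean. For $i \le k$ define $v_i^\circ := (v_i, 0) \in \mathbb{R}^{m+n}$ and $u_i^\circ := (0,u_i)\in\mathbb{R}^{m+n}$, and $W_k := \begin{bmatrix} v_1^\circ & u_1^\circ & v_2^\circ & u_2^\circ & \cdots & v_k^\circ & u_k^\circ\end{bmatrix} \in \mathbb{R}^{(m+n)\times 2k}$. *)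

From HB Require Import structures.
From mathcomp Require Import all_boot all_order all_algebra.
Set Implicit Arguments. Unset Strict Implicit. Unset Printing Implicit Defensive.
Import Order.TTheory GRing.Theory Num.Theory.
Local Open Scope ring_scope.

Definition dotv (R : rcfType) (N : nat) (x y : 'cV[R]_N) : R := (x^T *m y) 0 0.
Definition normv (R : rcfType) (N : nat) (x : 'cV[R]_N) : R := Num.sqrt (dotv x x).

(* Given vs = [v_1;..;v_k], us = [u_1;..;u_k]:
   q = A u_k - sum_{i<=k} (v_i^T A u_k) v_i   (so h_{k+1,k} = ||q||)
   p = B v_k - sum_{i<=k} (u_i^T B v_k) u_i   (so f_{k+1,k} = ||p||) *)
Definition ohr_q (R : rcfType) (m n : nat) (A : 'M[R]_(m, n))
  (vs : seq 'cV[R]_m) (us : seq 'cV[R]_n) : 'cV[R]_m :=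
  let uk := last 0 us in A *m uk - \sum_(v <- vs) dotv v (A *m uk) *: v.
Definition ohr_p (R : rcfType) (m n : nat) (B : 'M[R]_(n, m))
  (vs : seq 'cV[R]_m) (us : seq 'cV[R]_n) : 'cV[R]_n :=
  let vk := last 0 vs in B *m vk - \sum_(u <- us) dotv u (B *m vk) *: u.

(* ohr A B b c j = ([v_1;..;v_{j+1}], [u_1;..;u_{j+1}]) : the vectors produced
   by the orthogonal Hessenberg reduction process after j steps. *)
Fixpoint ohr (R : rcfType) (m n : nat) (A : 'M[R]_(m, n)) (B : 'M[R]_(n, m))
  (b : 'cV[R]_m) (c : 'cV[R]_n) (j : nat) : seq 'cV[R]_m * seq 'cV[R]_n :=
  match j with
  | 0 => ([:: (normv b)^-1 *: b], [:: (normv c)^-1 *: c])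
  | j'.+1 =>
      let vu := ohr A B b c j' in
      let q := ohr_q A vu.1 vu.2 in
      let p := ohr_p B vu.1 vu.2 in
      (rcons vu.1 ((normv q)^-1 *: q), rcons vu.2 ((normv p)^-1 *: p))
  end.

(* h_{j+1,j} and f_{j+1,j}, for j >= 1. *)
Definition ohr_h (R : rcfType) (m n : nat) (A : 'M[R]_(m, n)) (B : 'M[R]_(n, m))
  (b : 'cV[R]_m) (c : 'cV[R]_n) (j : nat) : R :=
  let vu := ohr A B b c j.-1 in normv (ohr_q A vu.1 vu.2).
Definition ohr_f (R : rcfType) (m n : nat) (A : 'M[R]_(m, n)) (B : 'M[R]_(n, m))
  (b : 'cV[R]_m) (c : 'cV[R]_n) (j : nat) : R :=
  let vu := ohr A B b c j.-1 in normv (ohr_p B vu.1 vu.2).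

Definition no_breakdown (R : rcfType) (m n : nat) (A : 'M[R]_(m, n)) (B : 'M[R]_(n, m))
  (b : 'cV[R]_m) (c : 'cV[R]_n) (k : nat) : Prop :=
  forall j : nat, (1 <= j <= k)%N -> 0 < ohr_h A B b c j /\ 0 < ohr_f A B b c j.

(* W_k = [v_1° u_1° v_2° u_2° ... v_k° u_k°]  (column with 0-based index j is
   v_{j/2+1}° if j is even and u_{j/2+1}° if j is odd). *)
Definition Wmat (R : rcfType) (m n : nat) (A : 'M[R]_(m, n)) (B : 'M[R]_(n, m))
  (b : 'cV[R]_m) (c : 'cV[R]_n) (k : nat) : 'M[R]_(m + n, 2 * k) :=
  let vu := ohr A B b c k.-1 in
  \matrix_(r < m + n, j < 2 * k)
    (if odd j then col_mx 0 (nth 0 vu.2 j./2) else col_mx (nth 0 vu.1 j./2) 0) r 0.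

(* Block Krylov subspace K_k(K, X) = span of the columns of X, KX, ..., K^{k-1}X,
   represented (mxalgebra convention) as the row space of the transposes. *)
Definition krylov (R : rcfType) (N p : nat) (K : 'M[R]_N) (X : 'M[R]_(N, p)) (k : nat)
  : 'M[R]_N := (\sum_(j < k) <<((K ^+ j) *m X)^T>>)%MS.

From HB Require Import structures.
From mathcomp Require Import all_boot all_order all_algebra.
From mathcomp Require Import zify.
Set Implicit Arguments. Unset Strict Implicit. Unset Printing Implicit Defensive.
Import Order.TTheory GRing.Theory Num.Theory.
Local Open Scope ring_scope.

(* Under no breakdown, K (v_j°) = lam v_j° + (B v_j)° and B v_j is a nonzero
   multiple of u_{j+1} plus a combination of u_1, ..., u_j (symmetrically for
   K (u_j°)); so by induction the columns of W_j and of D, KD, ..., K^{j-1} D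
   span the same space.  Since d = D (1, 1), the GMRES space K_k(K, d) lies in
   it, and a least-squares solution over range(K W_k), whose residual is
   orthogonal to that range, is at least as good as the GMRES iterate. *)

Definition cvmem (R : fieldType) (N : nat) (S : 'M[R]_N) (x : 'cV[R]_N) :=
  (x^T <= S)%MS.

Section ColumnMembership.
Variables (R : fieldType) (N : nat).
Implicit Types (S : 'M[R]_N) (x y : 'cV[R]_N).

Lemma cvmem0 S : cvmem S 0.
Proof. by rewrite /cvmem trmx0 sub0mx. Qed.

Lemma cvmemD S x y : cvmem S x -> cvmem S y -> cvmem S (x + y).
Proof. by rewrite /cvmem linearD; apply: addmx_sub. Qed.

Lemma cvmemZ S a x : cvmem S x -> cvmem S (a *: x).
Proof. by rewrite /cvmem linearZ; apply: scalemx_sub. Qed.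

Lemma cvmemB S x y : cvmem S x -> cvmem S y -> cvmem S (x - y).
Proof. by move=> hx hy; rewrite cvmemD // -scaleN1r cvmemZ. Qed.

Lemma cvmem_sum S (I : eqType) (s : seq I) (F : I -> 'cV[R]_N) :
  (forall i, i \in s -> cvmem S (F i)) -> cvmem S (\sum_(i <- s) F i).
Proof.
elim: s => [|a s IHs] hF; first by rewrite big_nil cvmem0.
rewrite big_cons cvmemD ?hF ?mem_head // IHs // => i si.
by rewrite hF // in_cons si orbT.
Qed.

Lemma cvmemS S S' x : (S <= S')%MS -> cvmem S x -> cvmem S' x.
Proof. by move=> sSS' hx; apply: submx_trans hx sSS'. Qed.

Lemma cvmemMr S x (u : 'M[R]_1) : cvmem S x -> cvmem S (x *m u).
Proof. by rewrite [u]mx11_scalar mul_mx_scalar; apply: cvmemZ. Qed.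

Lemma cvmem_mul_sumsmx j (G : 'I_j -> 'M[R]_N) (K S' : 'M[R]_N) x :
  (forall i, (G i *m K^T <= S')%MS) -> cvmem (\sum_(i < j) G i)%MS x ->
  cvmem S' (K *m x).
Proof.
move=> hG hx; rewrite /cvmem trmx_mul; apply: submx_trans (submxMr _ hx) _.
by rewrite sumsmxMr; apply/sumsmx_subP => i _; apply: hG.
Qed.

End ColumnMembership.

Section Krylov.
Variables (R : rcfType) (N p : nat) (K : 'M[R]_N) (X : 'M[R]_(N, p)).

Lemma krylovS j j' : (j <= j')%N -> (krylov K X j <= krylov K X j')%MS.
Proof.
move=> le_jj'; apply/sumsmx_subP => i _.
exact: (sumsmx_sup (Ordinal (leq_trans (ltn_ord i) le_jj'))).
Qed.

Lemma cvmem_krylov i j (y : 'cV[R]_p) :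
  (i < j)%N -> cvmem (krylov K X j) (K ^+ i *m X *m y).
Proof.
move=> lt_ij; rewrite /cvmem trmx_mul; apply: submx_trans (submxMl _ _) _.
by apply: (sumsmx_sup (Ordinal lt_ij)); rewrite ?genmxE.
Qed.

Lemma cvmem_krylovM j x :
  cvmem (krylov K X j) x -> cvmem (krylov K X j.+1) (K *m x).
Proof.
apply: cvmem_mul_sumsmx => i.
rewrite (eqmxMr _ (genmxE _)) -trmx_mul mulmxA mulmxE -exprS.
by apply: (sumsmx_sup (Ordinal (ltn_ord i : (i.+1 < j.+1)%N))); rewrite ?genmxE.
Qed.

Lemma krylov_mulmx q (Y : 'M[R]_(p, q)) j :
  (krylov K (X *m Y) j <= krylov K X j)%MS.
Proof.
by apply: sumsmxS => i _; rewrite !genmxE mulmxA trmx_mul submxMl.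
Qed.

End Krylov.

Section LeastSquares.
Variables (R : rcfType) (N : nat).
Implicit Types x y z : 'cV[R]_N.

Lemma dotvC x y : dotv x y = dotv y x.
Proof. by rewrite /dotv !mxE; apply: eq_bigr => i _; rewrite !mxE mulrC. Qed.

Lemma dotvDl x y z : dotv (x + y) z = dotv x z + dotv y z.
Proof. by rewrite /dotv linearD mulmxDl mxE. Qed.

Lemma dotvDr x y z : dotv z (x + y) = dotv z x + dotv z y.
Proof. by rewrite /dotv mulmxDr mxE. Qed.

Lemma dotvvE x : dotv x x = \sum_i x i 0 ^+ 2.
Proof. by rewrite /dotv mxE; apply: eq_bigr => i _; rewrite mxE expr2. Qed.

Lemma dotvv_ge0 x : 0 <= dotv x x.
Proof. by rewrite dotvvE sumr_ge0 // => i _; rewrite sqr_ge0. Qed.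

Lemma dotvv_eq0 x : (dotv x x == 0) = (x == 0).
Proof.
apply/idP/idP => [|/eqP->]; last by rewrite /dotv mulmx0 mxE.
rewrite dotvvE psumr_eq0 => [/allP x0|i _]; last by rewrite sqr_ge0.
apply/eqP/matrixP => i j; rewrite ord1 mxE.
by have /implyP/(_ isT) := x0 i (mem_index_enum _); rewrite sqrf_eq0 => /eqP.
Qed.

Lemma normv_eq0 x : (normv x == 0) = (x == 0).
Proof. by rewrite /normv sqrtr_eq0 le_eqVlt ltNge dotvv_ge0 orbF dotvv_eq0. Qed.

Lemma ler_normv x y : dotv x x <= dotv y y -> normv x <= normv y.
Proof. by move=> le_xy; rewrite /normv ler_sqrt // dotvv_ge0. Qed.

Variable p : nat.
Implicit Types M : 'M[R]_(N, p).

Lemma orth_residual_min M r w : r^T *m M = 0 -> normv r <= normv (r + M *m w).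
Proof.
move=> rM; apply: ler_normv.
have rMw : dotv r (M *m w) = 0 by rewrite /dotv mulmxA rM mul0mx mxE.
by rewrite dotvDl !dotvDr (dotvC _ r) rMw !add0r addr0 lerDl dotvv_ge0.
Qed.

Lemma kermx_gram M : (kermx (M^T *m M) == kermx M^T)%MS.
Proof.
apply/andP; split; last by rewrite sub_kermx mulmxA mulmx_ker mul0mx.
apply/row_subP => i; set w := row i _.
have wG : w *m (M^T *m M) = 0 by apply/eqP; rewrite -sub_kermx row_sub.
have /eqP : dotv (M *m w^T) (M *m w^T) = 0.
  by rewrite /dotv trmx_mul trmxK mulmxA -(mulmxA w) wG mul0mx mxE.
rewrite dotvv_eq0 sub_kermx => /eqP wM.
by rewrite -[w *m _]trmxK trmx_mul trmxK wM trmx0.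
Qed.

Lemma gram_eqmx M : (M^T *m M == M)%MS.
Proof.
have sGM : (M^T *m M <= M)%MS by apply: submxMl.
rewrite -(mxrank_leqif_eq sGM).2; apply/eqP.
have := mxrank_ker (M^T *m M); have := mxrank_ker M^T.
have := rank_leq_col M; have := rank_leq_row (M^T *m M).
by rewrite mxrank_tr (eqmx_rank (kermx_gram M)); lia.
Qed.

Lemma exists_min_residual M (d : 'cV[R]_N) :
  exists z : 'cV[R]_p, forall z' : 'cV[R]_p, normv (d - M *m z) <= normv (d - M *m z').
Proof.
have /submxP[w dM] : (d^T *m M <= M^T *m M)%MS.
  by rewrite (eqmxP (gram_eqmx M)) submxMl.
exists w^T => z'.
have rM : (d - M *m w^T)^T *m M = 0.
  by rewrite linearB /= mulmxBl trmx_mul trmxK dM -mulmxA subrr.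
have -> : d - M *m z' = d - M *m w^T + M *m (w^T - z').
  by rewrite mulmxBr addrA subrK.
exact: orth_residual_min.
Qed.

End LeastSquares.

Section HessenbergProcess.
Variables (R : rcfType) (m n : nat) (A : 'M[R]_(m, n)) (B : 'M[R]_(n, m))
  (b : 'cV[R]_m) (c : 'cV[R]_n).

Local Notation ohr := (ohr A B b c).

(* Indices are 0-based: ohr_v j is the paper's v_{j+1}. *)
Definition ohr_v j := nth 0 (ohr j).1 j.
Definition ohr_u j := nth 0 (ohr j).2 j.
Definition ohr_qv j := ohr_q A (ohr j).1 (ohr j).2.
Definition ohr_pv j := ohr_p B (ohr j).1 (ohr j).2.

Lemma size_ohr j : size (ohr j).1 = j.+1 /\ size (ohr j).2 = j.+1.
Proof. by elim: j => [|j [h1 h2]] //=; rewrite !size_rcons h1 h2. Qed.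

Lemma nth_ohr j l : (l <= j)%N ->
  nth 0 (ohr j).1 l = ohr_v l /\ nth 0 (ohr j).2 l = ohr_u l.
Proof.
move=> /subnKC <-; elim: (j - l)%N => [|t [h1 h2]]; first by rewrite addn0.
have [s1 s2] := size_ohr (l + t).
by rewrite addnS /= !nth_rcons s1 s2 ltnS leq_addr.
Qed.

Lemma ohr_v_mem j v : v \in (ohr j).1 -> exists2 l, (l <= j)%N & v = ohr_v l.
Proof.
case/(nthP 0) => l; rewrite (size_ohr j).1 ltnS => le_lj <-.
by exists l; rewrite ?(nth_ohr le_lj).1.
Qed.

Lemma ohr_u_mem j u : u \in (ohr j).2 -> exists2 l, (l <= j)%N & u = ohr_u l.
Proof.
case/(nthP 0) => l; rewrite (size_ohr j).2 ltnS => le_lj <-.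
by exists l; rewrite ?(nth_ohr le_lj).2.
Qed.

Lemma ohr_v0 : ohr_v 0 = (normv b)^-1 *: b. Proof. by []. Qed.
Lemma ohr_u0 : ohr_u 0 = (normv c)^-1 *: c. Proof. by []. Qed.

Lemma ohr_vS j : ohr_v j.+1 = (normv (ohr_qv j))^-1 *: ohr_qv j.
Proof. by rewrite /ohr_v /= nth_rcons (size_ohr j).1 ltnn eqxx. Qed.

Lemma ohr_uS j : ohr_u j.+1 = (normv (ohr_pv j))^-1 *: ohr_pv j.
Proof. by rewrite /ohr_u /= nth_rcons (size_ohr j).2 ltnn eqxx. Qed.

Lemma ohr_qvE j :
  ohr_qv j = A *m ohr_u j - \sum_(v <- (ohr j).1) dotv v (A *m ohr_u j) *: v.
Proof. by rewrite /ohr_qv /ohr_q -nth_last (size_ohr j).2. Qed.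

Lemma ohr_pvE j :
  ohr_pv j = B *m ohr_v j - \sum_(u <- (ohr j).2) dotv u (B *m ohr_v j) *: u.
Proof. by rewrite /ohr_pv /ohr_p -nth_last (size_ohr j).1. Qed.

Lemma mul_ohr_u j : ohr_qv j != 0 ->
  A *m ohr_u j = normv (ohr_qv j) *: ohr_v j.+1
                 + \sum_(v <- (ohr j).1) dotv v (A *m ohr_u j) *: v.
Proof.
by rewrite -normv_eq0 => hq; rewrite ohr_vS scalerA divff // scale1r ohr_qvE subrK.
Qed.

Lemma mul_ohr_v j : ohr_pv j != 0 ->
  B *m ohr_v j = normv (ohr_pv j) *: ohr_u j.+1
                 + \sum_(u <- (ohr j).2) dotv u (B *m ohr_v j) *: u.
Proof.
by rewrite -normv_eq0 => hp; rewrite ohr_uS scalerA divff // scale1r ohr_pvE subrK.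
Qed.

Lemma no_breakdownP k j : no_breakdown A B b c k -> (j < k)%N ->
  ohr_qv j != 0 /\ ohr_pv j != 0.
Proof.
move=> nb lt_jk; have [hh hf] := nb j.+1 lt_jk.
by rewrite -!normv_eq0 !gt_eqF.
Qed.

End HessenbergProcess.

Section BlockOperator.
Variables (R : rcfType) (m n : nat) (A : 'M[R]_(m, n)) (B : 'M[R]_(n, m))
  (b : 'cV[R]_m) (c : 'cV[R]_n) (lam mu : R).

Local Notation K := (block_mx lam%:M A B mu%:M : 'M[R]_(m + n)).
Local Notation D := (block_mx b 0 0 c : 'M[R]_(m + n, 1 + 1)).
Local Notation V := (ohr_v A B b c).
Local Notation U := (ohr_u A B b c).

(* inj_top *m x and inj_bot *m y are the paper's x° = (x, 0) and y° = (0, y). *)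
Definition inj_top : 'M[R]_(m + n, m) := col_mx 1%:M 0.
Definition inj_bot : 'M[R]_(m + n, n) := col_mx 0 1%:M.

Lemma inj_topE (x : 'cV[R]_m) : inj_top *m x = col_mx x 0.
Proof. by rewrite mul_col_mx mul1mx mul0mx. Qed.

Lemma inj_botE (y : 'cV[R]_n) : inj_bot *m y = col_mx 0 y.
Proof. by rewrite mul_col_mx mul1mx mul0mx. Qed.

Lemma mul_inj_top (x : 'cV[R]_m) :
  K *m (inj_top *m x) = lam *: (inj_top *m x) + inj_bot *m (B *m x).
Proof.
rewrite !inj_topE inj_botE mul_block_col !mulmx0 !addr0 mul_scalar_mx.
by rewrite scale_col_mx scaler0 add_col_mx add0r addr0.
Qed.

Lemma mul_inj_bot (y : 'cV[R]_n) :
  K *m (inj_bot *m y) = inj_top *m (A *m y) + mu *: (inj_bot *m y).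
Proof.
rewrite !inj_botE inj_topE mul_block_col !mulmx0 !add0r mul_scalar_mx.
by rewrite scale_col_mx scaler0 add_col_mx add0r addr0.
Qed.

Definition ohr_span j : 'M[R]_(m + n) :=
  (\sum_(i < j) (<<(inj_top *m V i)^T>> + <<(inj_bot *m U i)^T>>))%MS.

Lemma ohr_span_v i j : (i < j)%N -> cvmem (ohr_span j) (inj_top *m V i).
Proof.
move=> lt_ij; apply: (sumsmx_sup (Ordinal lt_ij)) => //=.
by apply: submx_trans (addsmxSl _ _); rewrite genmxE.
Qed.

Lemma ohr_span_u i j : (i < j)%N -> cvmem (ohr_span j) (inj_bot *m U i).
Proof.
move=> lt_ij; apply: (sumsmx_sup (Ordinal lt_ij)) => //=.
by apply: submx_trans (addsmxSr _ _); rewrite genmxE.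
Qed.

Lemma ohr_spanS j j' : (j <= j')%N -> (ohr_span j <= ohr_span j')%MS.
Proof.
move=> le_jj'; apply/sumsmx_subP => i _.
exact: (sumsmx_sup (Ordinal (leq_trans (ltn_ord i) le_jj'))).
Qed.

Lemma cvmem_ohr_spanM j x :
  (forall i, (i < j)%N -> ohr_qv A B b c i != 0 /\ ohr_pv A B b c i != 0) ->
  cvmem (ohr_span j) x -> cvmem (ohr_span j.+1) (K *m x).
Proof.
move=> nb; apply: cvmem_mul_sumsmx => i.
rewrite addsmxMr addsmx_sub !(eqmxMr _ (genmxE _)) -!trmx_mul.
have [hq hp] := nb i (ltn_ord i).
have lt_ij : (i < j.+1)%N := leqW (ltn_ord i).
have lt_i1j : (i.+1 < j.+1)%N := ltn_ord i.
apply/andP; split; rewrite -/(cvmem _ (K *m _)).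
- rewrite mul_inj_top (mul_ohr_v hp) mulmxDr mulmx_sumr -scalemxAr.
  rewrite !cvmemD ?cvmemZ ?ohr_span_v ?ohr_span_u //.
  apply: cvmem_sum => u /ohr_u_mem[l le_li ->].
  by rewrite -scalemxAr cvmemZ // ohr_span_u // (leq_ltn_trans le_li).
- rewrite mul_inj_bot (mul_ohr_u hq) mulmxDr mulmx_sumr -scalemxAr.
  rewrite !cvmemD ?cvmemZ ?ohr_span_v ?ohr_span_u //.
  apply: cvmem_sum => v /ohr_v_mem[l le_li ->].
  by rewrite -scalemxAr cvmemZ // ohr_span_v // (leq_ltn_trans le_li).
Qed.

Lemma mulD_top : D *m col_mx 1%:M 0 = inj_top *m b.
Proof. by rewrite inj_topE mul_block_col !mulmx0 !mulmx1 !addr0. Qed.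

Lemma mulD_bot : D *m col_mx 0 1%:M = inj_bot *m c.
Proof. by rewrite inj_botE mul_block_col !mulmx0 !mulmx1 !add0r. Qed.

Lemma cvmem_krylov_ohr j l : (l < j)%N ->
  cvmem (krylov K D j) (inj_top *m V l) /\ cvmem (krylov K D j) (inj_bot *m U l).
Proof.
elim: j l => [|j IHj] l //; rewrite ltnS leq_eqVlt => /predU1P[->|/IHj[h1 h2]];
  last by split; apply: cvmemS (krylovS _ _ (leqnSn j)) _.
case: j IHj => [_|i IHi].
  have KD0 (y : 'cV[R]_(1 + 1)) : cvmem (krylov K D 1) (D *m y).
    by have := cvmem_krylov K D y (ltn0Sn 0); rewrite expr0 mul1mx.
  by rewrite ohr_v0 ohr_u0 -!scalemxAr -mulD_top -mulD_bot !cvmemZ.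
have IHiS l' : (l' <= i)%N -> cvmem (krylov K D i.+2) (inj_top *m V l') /\
                              cvmem (krylov K D i.+2) (inj_bot *m U l').
  move=> /IHi[h1 h2].
  by split; apply: cvmemS (krylovS _ _ (leqnSn _)) _.
have [hv hu] := IHi i (ltnSn i).
have [hv' hu'] := IHiS i (leqnn i).
split.
- rewrite ohr_vS ohr_qvE -scalemxAr cvmemZ // mulmxBr mulmx_sumr.
  have -> : inj_top *m (A *m U i) = K *m (inj_bot *m U i) - mu *: (inj_bot *m U i).
    by rewrite mul_inj_bot addrK.
  rewrite !cvmemB ?cvmem_krylovM ?cvmemZ //.
  apply: cvmem_sum => v /ohr_v_mem[l' le_l'i ->].
  by rewrite -scalemxAr cvmemZ // (IHiS l' le_l'i).1.
- rewrite ohr_uS ohr_pvE -scalemxAr cvmemZ // mulmxBr mulmx_sumr.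
  have -> : inj_bot *m (B *m V i) = K *m (inj_top *m V i) - lam *: (inj_top *m V i).
    by rewrite mul_inj_top addrC addKr.
  rewrite !cvmemB ?cvmem_krylovM ?cvmemZ //.
  apply: cvmem_sum => u /ohr_u_mem[l' le_l'i ->].
  by rewrite -scalemxAr cvmemZ // (IHiS l' le_l'i).2.
Qed.

Lemma ohr_span_sub_krylov j : (ohr_span j <= krylov K D j)%MS.
Proof.
apply/sumsmx_subP => i _; rewrite addsmx_sub !genmxE.
by have [hv hu] := cvmem_krylov_ohr (ltn_ord i); apply/andP.
Qed.

Lemma cvmem_ohr_span_pow k i (y : 'cV[R]_(1 + 1)) :
  b != 0 -> c != 0 -> no_breakdown A B b c k.-1 -> (i < k)%N ->
  cvmem (ohr_span i.+1) (K ^+ i *m D *m y).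
Proof.
move=> hb hc nb; elim: i => [|i IHi] lt_ik.
  have -> : y = col_mx 1%:M 0 *m usubmx y + col_mx 0 1%:M *m dsubmx y.
    by rewrite !mul_col_mx !mul1mx !mul0mx add_col_mx addr0 add0r vsubmxK.
  have bV : inj_top *m b = normv b *: (inj_top *m V 0).
    by rewrite ohr_v0 -scalemxAr scalerA divff ?normv_eq0 // scale1r.
  have cU : inj_bot *m c = normv c *: (inj_bot *m U 0).
    by rewrite ohr_u0 -scalemxAr scalerA divff ?normv_eq0 // scale1r.
  rewrite expr0 mul1mx mulmxDr !mulmxA mulD_top mulD_bot bV cU.
  by rewrite cvmemD ?cvmemMr ?cvmemZ ?ohr_span_v ?ohr_span_u.
rewrite exprS -mulmxE -!mulmxA; apply: cvmem_ohr_spanM => [i' lt_i'i|].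
  by apply: (no_breakdownP nb); lia.
by rewrite mulmxA IHi // ltnW.
Qed.

Lemma krylov_sub_ohr_span k : b != 0 -> c != 0 -> no_breakdown A B b c k.-1 ->
  (krylov K D k <= ohr_span k)%MS.
Proof.
move=> hb hc nb; apply/sumsmx_subP => i _; rewrite genmxE; apply/row_subP => r.
rewrite -tr_col colE; apply: cvmemS (ohr_spanS (ltn_ord i)) _.
exact: cvmem_ohr_span_pow hb hc nb (ltn_ord i).
Qed.

Lemma col_Wmat k (j : 'I_(2 * k)) :
  col j (Wmat A B b c k) = if odd j then inj_bot *m U j./2 else inj_top *m V j./2.
Proof.
have le_jk : (j./2 <= k.-1)%N by have := ltn_ord j; lia.
have [hv hu] := nth_ohr A B b c le_jk.
by apply/matrixP => r s; rewrite ord1 !mxE hv hu; case: odd; rewrite ?inj_topE ?inj_botE.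
Qed.

Lemma Wmat_eq_ohr_span k : ((Wmat A B b c k)^T == ohr_span k)%MS.
Proof.
apply/andP; split.
  apply/row_subP => j; rewrite -tr_col col_Wmat.
  have lt_jk : (j./2 < k)%N by have := ltn_ord j; lia.
  by case: odd; [apply: ohr_span_u | apply: ohr_span_v].
apply/sumsmx_subP => i _; rewrite addsmx_sub !genmxE.
have ev : (i.*2 < 2 * k)%N by have := ltn_ord i; lia.
have od : (i.*2.+1 < 2 * k)%N by have := ltn_ord i; lia.
have := row_sub (Ordinal ev) (Wmat A B b c k)^T.
have := row_sub (Ordinal od) (Wmat A B b c k)^T.
by rewrite -!tr_col !col_Wmat /= odd_double doubleK uphalf_double => -> ->.
Qed.

End BlockOperator.

Unset Implicit Arguments. Set Strict Implicit.

Theorem mainTheorem5 (R : rcfType) (m n : nat)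
  (A : 'M[R]_(m, n)) (B : 'M[R]_(n, m)) (b : 'cV[R]_m) (c : 'cV[R]_n)
  (lam mu : R) (k : nat) :
  b != 0 -> c != 0 -> (1 <= k)%N -> no_breakdown A B b c k.-1 ->
  let K : 'M[R]_(m + n) := block_mx lam%:M A B mu%:M in
  let d : 'cV[R]_(m + n) := col_mx b c in
  let D : 'M[R]_(m + n, 1 + 1) := block_mx b 0 0 c in
  let W := Wmat A B b c k in
  [/\ (W^T == krylov K D k)%MS,
      (krylov K d k <= krylov K D k)%MS &
      exists z : 'cV[R]_(2 * k),
        (forall z' : 'cV[R]_(2 * k),
            normv (d - K *m W *m z) <= normv (d - K *m W *m z')) /\
        (forall x : 'cV[R]_(m + n), (x^T <= krylov K d k)%MS ->
            normv (d - K *m W *m z) <= normv (d - K *m x))].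
Proof.
move=> hb hc _ nb K d D W.
have SK : (ohr_span A B b c k == krylov K D k)%MS.
  by rewrite ohr_span_sub_krylov krylov_sub_ohr_span.
have WK : (W^T == krylov K D k)%MS.
  exact/eqmxP/(eqmx_trans (eqmxP (Wmat_eq_ohr_span A B b c k)) (eqmxP SK)).
have dD : (krylov K d k <= krylov K D k)%MS.
  have -> : d = D *m col_mx 1%:M 1%:M.
    by rewrite mul_block_col !mulmx1 addr0 add0r.
  exact: krylov_mulmx.
have [z zmin] := exists_min_residual (K *m W) d.
split => //; exists z; split => // x /submx_trans/(_ dD).
rewrite -(eqmxP WK) => /submxP[w xW].
by rewrite -(trmxK x) xW trmx_mul trmxK mulmxA.
Qed.
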